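(* The $5$-dimensional real unimodular Lie algebra $\mathfrak{sl}(2,\mathbb R)\ltimes\mathbb R^2$ possesses an inner product with a geodesic basis.
   Context: $\mathfrak{sl}(2,\mathbb R)\ltimes\mathbb R^2$ is the semidirect product in which $\mathfrak{sl}(2,\mathbb R)$ acts on the abelian ideal $\mathbb R^2$ by its canonical linear action; equivalently it has basis $\{X_1,\dots,X_5\}$ with nonzero brackets $[X_1,X_2]=2X_2$, $[X_1,X_3]=-2X_3$, $[X_1,X_4]=X_4$, $[X_1,X_5]=-X_5$, $[X_2,X_3]=X_1$, $[X_3,X_4]=X_5$, $[X_2,X_5]=X_4$. For an inner product $\langle\cdot,\cdot\rangle$ on a real Lie algebra $\mathfrak g$, a nonzero $X\in\mathfrak g$ is a geodesic element if $\langle X,[X,Y]\rangle=0$ for all $Y\in\mathfrak g$; a geodesic basis is a basis consisting of geodesic elements. *)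

From HB Require Import structures.
From mathcomp Require Import all_boot all_order all_algebra.
From mathcomp Require Import reals.
Set Implicit Arguments. Unset Strict Implicit. Unset Printing Implicit Defensive.
Import Order.TTheory GRing.Theory Num.Theory.
Local Open Scope ring_scope.

(* The Lie algebra sl(2,R) ⋉ R^2 is modelled on row vectors 'rV[R]_5,
   coordinates w.r.t. the basis X1,...,X5 (X_k is index k-1). *)

Definition ebas (R : realType) (k : nat) : 'rV[R]_5 := delta_mx 0 (inord k).

(* [X_{i+1}, X_{j+1}] from the structure constants of the paper. *)
Definition br_basis (R : realType) (i j : 'I_5) : 'rV[R]_5 :=
  match val i, val j with
  | 0, 1 => 2 *: ebas R 1 | 1, 0 => - (2 *: ebas R 1)
  | 0, 2 => - (2 *: ebas R 2) | 2, 0 => 2 *: ebas R 2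
  | 0, 3 => ebas R 3 | 3, 0 => - ebas R 3
  | 0, 4 => - ebas R 4 | 4, 0 => ebas R 4
  | 1, 2 => ebas R 0 | 2, 1 => - ebas R 0
  | 2, 3 => ebas R 4 | 3, 2 => - ebas R 4
  | 1, 4 => ebas R 3 | 4, 1 => - ebas R 3
  | _, _ => 0
  end.

Definition lie_br (R : realType) (x y : 'rV[R]_5) : 'rV[R]_5 :=
  \sum_(i < 5) \sum_(j < 5) (x 0 i * y 0 j) *: br_basis R i j.

Definition form (R : realType) (S : 'M[R]_5) (x y : 'rV[R]_5) : R :=
  (x *m S *m y^T) 0 0.

Definition is_inner_product (R : realType) (S : 'M[R]_5) : Prop :=
  S^T = S /\ (forall x : 'rV[R]_5, x != 0 -> 0 < form S x x).

Definition geodesic_element (R : realType) (S : 'M[R]_5) (X : 'rV[R]_5) : Prop :=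
  X != 0 /\ (forall Y : 'rV[R]_5, form S X (lie_br X Y) = 0).

Definition geodesic_basis (R : realType) (S : 'M[R]_5) (B : 'M[R]_5) : Prop :=
  row_free B /\ (forall i : 'I_5, geodesic_element S (row i B)).

(* Take the inner product diag(1, 1, 1, 2, 2) in the basis X_1, ..., X_5 and the
   basis X_1, X_2 + X_3, X_2 - X_3, X_2 + X_5, X_3 + X_4.  The first three vectors
   are geodesic already in sl(2,R).  For X = X_2 + X_5 the only term of <X, [X, Y]>
   that survives is the one in the X_1-coordinate y_1 of Y: it is -2 y_1 from
   [X_2, X_1] = -2 X_2 and 2 y_1 from [X_5, X_1] = X_5 counted with weight 2, so the
   weight 2 on R^2 exactly compensates the eigenvalue 2 of ad X_1 on X_2.  The same
   cancellation occurs for X_3 + X_4, and the five vectors are independent. *)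
From Pilot Require Import Defs.
From mathcomp Require Import all_boot all_order all_algebra.
From mathcomp Require Import reals ring lra.
Import Order.TTheory GRing.Theory Num.Theory.
Local Open Scope ring_scope.

Lemma row_free_row_neq0 (F : fieldType) (m n : nat) (A : 'M[F]_(m, n)) (i : 'I_m) :
  row_free A -> row i A != 0.
Proof.
move=> freeA; apply/eqP; rewrite rowE -(mul0mx _ A) => /(row_free_inj freeA).
by move/matrixP/(_ 0 i)/eqP; rewrite !mxE !eqxx oner_eq0.
Qed.

Lemma diag_mx_form (R : comPzRingType) (n : nat) (d x y : 'rV[R]_n) :
  (x *m diag_mx d *m y^T) 0 0 = \sum_i d 0 i * (x 0 i * y 0 i).
Proof.
by rewrite mul_mx_diag mxE; apply: eq_bigr => i _; rewrite !mxE mulrCA mulrA.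
Qed.

Lemma diag_mx_form_gt0 (R : realDomainType) (n : nat) (d x : 'rV[R]_n) :
  (forall i, 0 < d 0 i) -> x != 0 -> 0 < (x *m diag_mx d *m x^T) 0 0.
Proof.
move=> d_gt0 x_neq0; rewrite diag_mx_form.
have term_ge0 i : 0 <= d 0 i * (x 0 i * x 0 i).
  by rewrite -expr2 mulr_ge0 ?sqr_ge0 ?ltW.
rewrite lt_def sumr_ge0 // andbT; apply: contraNneq x_neq0 => sum0.
apply/eqP/rowP => i; rewrite mxE; apply/eqP.
have /eqP := psumr_eq0P (fun j _ => term_ge0 j) sum0 (i := i) isT.
by rewrite mulf_eq0 gt_eqF //= -expr2 sqrf_eq0.
Qed.

Lemma eq_inord (n k : nat) (j : 'I_n.+1) : (k <= n)%N -> (j == inord k) = (val j == k).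
Proof. by move=> k_le_n; rewrite -val_eqE /= inordK. Qed.

Notation o0 := (@Ordinal 5 0 isT).
Notation o1 := (@Ordinal 5 1 isT).
Notation o2 := (@Ordinal 5 2 isT).
Notation o3 := (@Ordinal 5 3 isT).
Notation o4 := (@Ordinal 5 4 isT).

Lemma big_ord5 (V : nmodType) (F : 'I_5 -> V) :
  \sum_(i < 5) F i = F o0 + F o1 + F o2 + F o3 + F o4.
Proof.
rewrite !big_ord_recl big_ord0 addr0 !addrA.
by congr (F _ + F _ + F _ + F _ + F _); apply: val_inj.
Qed.

Lemma lie_brE (R : realType) (x y : 'rV[R]_5) :
  lie_br x y =
  \row_k (match val k with
   | 0 => x 0 o1 * y 0 o2 - x 0 o2 * y 0 o1
   | 1 => 2 * (x 0 o0 * y 0 o1 - x 0 o1 * y 0 o0)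
   | 2 => - (2 * (x 0 o0 * y 0 o2 - x 0 o2 * y 0 o0))
   | 3 => x 0 o0 * y 0 o3 - x 0 o3 * y 0 o0 + x 0 o1 * y 0 o4 - x 0 o4 * y 0 o1
   | _ => - (x 0 o0 * y 0 o4 - x 0 o4 * y 0 o0) + x 0 o2 * y 0 o3 - x 0 o3 * y 0 o2
   end).
Proof.
apply/rowP => k; rewrite mxE /lie_br !big_ord5 !mxE /br_basis /= !eq_inord //.
by case: k => [[|[|[|[|[|?]]]]] ?] //=; ring.
Qed.

Definition gram (R : realType) : 'M[R]_5 :=
  diag_mx (\row_(i < 5) if (i < 3)%N then 1 else 2).

Lemma form_gram (R : realType) (x y : 'rV[R]_5) :
  Defs.form (gram R) x y = x 0 o0 * y 0 o0 + x 0 o1 * y 0 o1 + x 0 o2 * y 0 o2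
    + 2 * (x 0 o3 * y 0 o3) + 2 * (x 0 o4 * y 0 o4).
Proof. by rewrite /Defs.form diag_mx_form big_ord5 !mxE /=; ring. Qed.

Lemma gram_inner_product (R : realType) : is_inner_product (gram R).
Proof.
split; first exact: tr_diag_mx.
by move=> x; apply: diag_mx_form_gt0 => i; rewrite mxE; case: ifP.
Qed.

Definition geodesic_row (R : realType) (i : nat) : 'rV[R]_5 :=
  match i with
  | 0 => ebas R 0
  | 1 => ebas R 1 + ebas R 2
  | 2 => ebas R 1 - ebas R 2
  | 3 => ebas R 1 + ebas R 4
  | _ => ebas R 2 + ebas R 3
  end.

Definition geodesic_frame (R : realType) : 'M[R]_5 :=
  \matrix_(i < 5) geodesic_row R i.

Lemma row_free_geodesic_frame (R : realType) : row_free (geodesic_frame R).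
Proof.
apply: inj_row_free => v /rowP coord.
have := coord o0; have := coord o1; have := coord o2; have := coord o3.
have := coord o4; rewrite !mxE !big_ord5 !mxE ?eq_inord //= => c4 c3 c2 c1 c0.
by apply/rowP => -[[|[|[|[|[|//]]]]] lt_k]; rewrite mxE (bool_irrelevance lt_k isT); lra.
Qed.

Lemma geodesic_frame_row (R : realType) (i : 'I_5) (Y : 'rV[R]_5) :
  Defs.form (gram R) (row i (geodesic_frame R)) (lie_br (row i (geodesic_frame R)) Y) = 0.
Proof.
rewrite form_gram lie_brE rowK !mxE.
by case: i => [[|[|[|[|[|?]]]]] ?] //=; rewrite !mxE ?eq_inord //=; ring.
Qed.

Theorem proposition8p1 (R : realType) :
  exists S : 'M[R]_5, is_inner_product S /\ exists B : 'M[R]_5, geodesic_basis S B.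
Proof.
exists (gram R); split; first exact: gram_inner_product.
exists (geodesic_frame R); split; first exact: row_free_geodesic_frame.
move=> i; split; last exact: geodesic_frame_row.
exact/row_free_row_neq0/row_free_geodesic_frame.
Qed.
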